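(* Let $D$ be finite or countably infinite, let $(\rho^0_{kl})_{k,l=1}^D$ be the matrix of a density operator (positive semidefinite, trace one) in some orthonormal basis, and let $(U_{mn})_{m,n=1}^D$ be a unitary matrix. Define $\mu_n=\sum_k|U_{nk}|^2\rho^0_{kk}$, $$\nu_{mn}=\sum_{k\neq l}U_{mk}U_{ml}^*U_{nk}^*U_{nl}|\rho^0_{kl}|^2,\qquad \tilde\nu_{mn}=\sum_{k,l}U_{mk}U_{ml}^*U_{nk}^*U_{nl}|\rho^0_{kl}|^2 .$$ Then for all $m,n$, $\nu_{mn}\le\tilde\nu_{mn}\le\mu_m\mu_n$.
   Context: The quantities $\nu_{mn}$ and $\tilde\nu_{mn}$ are real numbers (each sum is invariant under complex conjugation combined with exchanging $k$ and $l$). *)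

From HB Require Import structures.
From mathcomp Require Import all_boot all_order all_algebra.
From mathcomp Require Import complex.
From mathcomp Require Import all_classical all_reals all_analysis.
Set Implicit Arguments. Unset Strict Implicit. Unset Printing Implicit Defensive.
Import Order.TTheory GRing.Theory Num.Theory.
Import numFieldNormedType.Exports.
Local Open Scope ring_scope.

(* Index set: [D = Some d] means {0,...,d-1} (finite dimension d);
   [D = None] means all of nat (countably infinite dimension). *)
Definition idx (D : option nat) (k : nat) : bool :=
  if D is Some d then (k < d)%N else true.

Section Sums.
Variable R : realType.

Definition psum (D : option nat) (f : nat -> R[i]) (N : nat) : R[i] :=
  \sum_(k < N | idx D k) f k.

Definition sum_to (D : option nat) (f : nat -> R[i]) (s : R[i]) : Prop :=
  ((fun N : nat => (complex.Re (psum D f N) : R)) @ \oo --> (complex.Re s : R))%classic /\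
  ((fun N : nat => (complex.Im (psum D f N) : R)) @ \oo --> (complex.Im s : R))%classic.

Definition dsum_to (D : option nat) (F : nat -> nat -> R[i]) (s : R[i]) : Prop :=
  exists g : nat -> R[i], (forall k, sum_to D (F k) (g k)) /\ sum_to D g s.

(* matrix of a density operator: positive semidefinite (every finite section
   is PSD, i.e. x^* rho x >= 0 for every finitely supported x) and trace one *)
Definition density_matrix (D : option nat) (rho : nat -> nat -> R[i]) : Prop :=
  (forall (N : nat) (x : nat -> R[i]),
     0 <= \sum_(k < N | idx D k) \sum_(l < N | idx D l)
            (x k)^* * rho k l * x l) /\
  sum_to D (fun k => rho k k) 1.

Definition unitary_matrix (D : option nat) (U : nat -> nat -> R[i]) : Prop :=
  forall m n, idx D m -> idx D n ->
    sum_to D (fun k => U m k * (U n k)^*) (m == n)%:R /\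
    sum_to D (fun k => (U k m)^* * U k n) (m == n)%:R.

End Sums.

From HB Require Import structures.
From mathcomp Require Import all_boot all_order all_algebra.
From mathcomp Require Import complex.
From mathcomp Require Import all_classical all_reals all_analysis.
From mathcomp Require Import ring lra.
Import Order.TTheory GRing.Theory Num.Theory.
Import numFieldNormedType.Exports.
Local Open Scope ring_scope.
Set Implicit Arguments. Unset Strict Implicit.

(* Positivity of rho gives |rho_kl|^2 <= rho_kk rho_ll, and unitarity gives
   |U_mk| <= 1, so the double series is dominated by the product of the
   summable sequence c_k = |U_mk| |U_nk| rho_kk with itself.  Its iterated sum
   is therefore also the limit of the square partial sums over k, l < K.  These
   are real, since exchanging k and l conjugates them, and by AM-GM they are
   bounded by (sum_k |U_mk|^2 rho_kk) (sum_k |U_nk|^2 rho_kk).  Finally, the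
   diagonal terms |U_mk|^2 |U_nk|^2 rho_kk^2 are nonnegative. *)

Section RealSeries.
Variables (R : realType) (D : option nat).
Implicit Types (u v c : nat -> R) (s t : R).

Definition restr u k : R := if idx D k then u k else 0.
Definition psumr u N : R := \sum_(0 <= k < N) restr u k.
Definition rsum_to u s : Prop := (psumr u @ \oo --> s)%classic.

Lemma psumr0 u : psumr u 0 = 0.
Proof. by rewrite /psumr big_geq. Qed.

Lemma psumr_split u a b : (a <= b)%N ->
  psumr u b = psumr u a + \sum_(a <= k < b) restr u k.
Proof. by move=> ab; rewrite /psumr (big_cat_nat (leq0n a) ab). Qed.

Lemma psumr_eq u v N : (forall k, idx D k -> u k = v k) -> psumr u N = psumr v N.
Proof. by move=> uv; apply: eq_bigr => k _; rewrite /restr; case: ifP => // /uv. Qed.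

Lemma psumr_le u v N : (forall k, idx D k -> u k <= v k) -> psumr u N <= psumr v N.
Proof. by move=> uv; apply: ler_sum => k _; rewrite /restr; case: ifP => // /uv. Qed.

Lemma psumr_ge0 u N : (forall k, idx D k -> 0 <= u k) -> 0 <= psumr u N.
Proof. by move=> u0; apply: sumr_ge0 => k _; rewrite /restr; case: ifP => // /u0. Qed.

Lemma psumrD u v N : psumr (fun k => u k + v k) N = psumr u N + psumr v N.
Proof.
rewrite /psumr -big_split /=; apply: eq_bigr => k _.
by rewrite /restr; case: ifP; rewrite ?addr0.
Qed.

Lemma psumrMl a u N : psumr (fun k => a * u k) N = a * psumr u N.
Proof.
rewrite /psumr mulr_sumr; apply: eq_bigr => k _.
by rewrite /restr; case: ifP; rewrite ?mulr0.
Qed.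

Lemma psumrMr a u N : psumr (fun k => u k * a) N = psumr u N * a.
Proof. by rewrite mulrC -psumrMl; apply: psumr_eq => k _; rewrite mulrC. Qed.

Lemma psumr_nondecreasing u : (forall k, idx D k -> 0 <= u k) ->
  {homo psumr u : a b / (a <= b)%N >-> a <= b}.
Proof.
move=> u0 a b ab; rewrite (psumr_split u ab) lerDl; apply: sumr_ge0 => k _.
by rewrite /restr; case: ifP => // /u0.
Qed.

Lemma psumr_dist_le u c a b : (forall k, idx D k -> `|u k| <= c k) -> (a <= b)%N ->
  `|psumr u b - psumr u a| <= psumr c b - psumr c a.
Proof.
move=> uc ab; rewrite (psumr_split u ab) (psumr_split c ab) !(addrC (psumr _ a)) !addrK.
apply: le_trans (ler_norm_sum _ _ _) _; apply: ler_sum => k _.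
by rewrite /restr; case: ifP => [/uc //|]; rewrite normr0.
Qed.

Lemma psumr_delta u k N : (forall l, l != k -> u l = 0) -> (k < N)%N ->
  psumr u N = restr u k.
Proof.
move=> uk kN; rewrite /psumr (bigD1_seq k) ?mem_iota ?iota_uniq ?subn0 //=.
by rewrite big1 ?addr0 // => l lk; rewrite /restr uk //; case: ifP.
Qed.

Lemma psumr_fin d u N : D = Some d -> (d <= N)%N -> psumr u N = psumr u d.
Proof.
move=> Dd dN; rewrite (psumr_split u dN) big_nat_cond big1 ?addr0 //.
by move=> k /andP[/andP[dk _] _]; rewrite /restr /idx Dd ltnNge dk.
Qed.

Lemma rsum_to_eq u v s : (forall k, idx D k -> u k = v k) ->
  rsum_to u s -> rsum_to v s.
Proof.
by move=> uv; rewrite /rsum_to (_ : psumr u = psumr v) //; apply/funext => N; exact: psumr_eq.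
Qed.

Lemma rsum_to0 u : (forall k, idx D k -> u k = 0) -> rsum_to u 0.
Proof.
move=> u0; rewrite /rsum_to (_ : psumr u = fun=> 0); first exact: cvg_cst.
by apply/funext => N; rewrite /psumr big1 // => k _; rewrite /restr; case: ifP => // /u0.
Qed.

Lemma rsum_toMl a u s : rsum_to u s -> rsum_to (fun k => a * u k) (a * s).
Proof.
move=> us; rewrite /rsum_to (_ : psumr _ = fun N => a * psumr u N).
  exact: (@cvgMl_tmp _ _ _ _ (psumr u) a s us).
by apply/funext => N; apply: psumrMl.
Qed.

Lemma rsum_toB u v s t : rsum_to u s -> rsum_to v t ->
  rsum_to (fun k => u k - v k) (s - t).
Proof.
move=> us vt; rewrite /rsum_to (_ : psumr _ = psumr u - psumr v); first exact: cvgB.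
apply/funext => N; rewrite /psumr !fctE -sumrB; apply: eq_bigr => k _.
by rewrite /restr; case: ifP; rewrite ?subr0.
Qed.

Lemma rsum_to_delta u k : (forall l, l != k -> u l = 0) -> rsum_to u (restr u k).
Proof.
move=> uk; apply: cvg_near_cst; near=> N.
by apply: psumr_delta uk _; near: N; exact: nbhs_infty_gt.
Unshelve. all: by end_near.
Qed.

Lemma psumr_le_rsum c s : (forall k, idx D k -> 0 <= c k) -> rsum_to c s ->
  forall N, psumr c N <= s.
Proof.
move=> c0 cs N; apply: (ler_cvg_to (cvg_cst (psumr c N)) cs).
near=> M; apply: psumr_nondecreasing => //; near: M; exact: nbhs_infty_ge.
Unshelve. all: by end_near.
Qed.

Lemma rsum_to_ge0 c s : (forall k, idx D k -> 0 <= c k) -> rsum_to c s -> 0 <= s.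
Proof. by move=> c0 cs; have := psumr_le_rsum c0 cs 0; rewrite psumr0. Qed.

Lemma term_le_rsum c s k : (forall k, idx D k -> 0 <= c k) -> rsum_to c s ->
  idx D k -> c k <= s.
Proof.
move=> c0 cs Dk; apply: le_trans (psumr_le_rsum c0 cs k.+1).
by rewrite /psumr big_nat_recr //= /restr Dk lerDr -/(psumr c k) psumr_ge0.
Qed.

Lemma rsum_to_dominated u c M : (forall k, idx D k -> `|u k| <= c k) ->
  (forall N, psumr c N <= M) -> exists s, rsum_to u s.
Proof.
move=> uc cM.
have c0 k : idx D k -> 0 <= c k by move/uc; apply: le_trans.
have uc0 k : idx D k -> 0 <= u k + c k.
  by move/uc => uck; have := ler_norm (- u k); rewrite normrN; lra.
have cvg_c : cvgn (psumr c).
  by apply: nondecreasing_is_cvgn; [exact: psumr_nondecreasing c0 | exists M => _ [N _ <-]].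
have cvg_uc : cvgn (psumr (fun k => u k + c k)).
  apply: nondecreasing_is_cvgn; first exact: psumr_nondecreasing uc0.
  exists (M + M) => _ [N _ <-]; rewrite psumrD lerD //.
  by apply: le_trans (cM N); apply: psumr_le => k /uc; apply: le_trans (ler_norm _).
exists (limn (psumr (fun k => u k + c k)) - limn (psumr c)); rewrite /rsum_to.
rewrite (_ : psumr u = psumr (fun k => u k + c k) - psumr c); first exact: cvgB.
by apply/funext => N; rewrite !fctE psumrD addrK.
Qed.

Lemma rsum_to_tail u c s sc : (forall k, idx D k -> `|u k| <= c k) ->
  rsum_to u s -> rsum_to c sc -> forall N, `|s - psumr u N| <= sc - psumr c N.
Proof.
move=> uc us csc N.
have dist_cvg : ((fun M => `|psumr u M - psumr u N|) @ \oo --> `|s - psumr u N|)%classic.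
  by apply: cvg_norm; apply: cvgB => //; exact: cvg_cst.
apply: (ler_cvg_to dist_cvg (cvg_cst (sc - psumr c N))); near=> M.
have NM : (N <= M)%N by near: M; exact: nbhs_infty_ge.
apply: le_trans (psumr_dist_le uc NM) _; rewrite lerD2r.
by apply: (psumr_le_rsum _ csc) => k /uc; apply: le_trans.
Unshelve. all: by end_near.
Qed.

Lemma rsum_to_square (G : nat -> nat -> R) c sc g t :
  (forall k, idx D k -> 0 <= c k) ->
  (forall k l, idx D k -> idx D l -> `|G k l| <= c k * c l) ->
  rsum_to c sc -> (forall k, idx D k -> rsum_to (G k) (g k)) -> rsum_to g t ->
  ((fun K => psumr (fun k => psumr (G k) K) K) @ \oo --> t)%classic.
Proof.
move=> c0 Gc csc Gg gt.
pose err K := psumr (fun k => psumr (G k) K - g k) K.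
have sc0 : 0 <= sc := rsum_to_ge0 c0 csc.
have row_tail k K : idx D k -> `|psumr (G k) K - g k| <= c k * (sc - psumr c K).
  move=> Dk; rewrite distrC mulrBr -psumrMl.
  exact: (rsum_to_tail (c := fun l => c k * c l) (Gc k ^~ Dk) (Gg k Dk)
                       (rsum_toMl (a := c k) csc) K).
have err_le K : `|err K| <= sc * (sc - psumr c K).
  have tail0 : 0 <= sc - psumr c K by rewrite subr_ge0; exact: psumr_le_rsum.
  have := psumr_dist_le (fun k => row_tail k K) (leq0n K).
  rewrite !psumr0 !subr0 psumrMr => /le_trans; apply.
  by rewrite ler_wpM2r // psumr_le_rsum.
have err_cvg0 : (err @ \oo --> 0)%classic.
  have bound_cvg0 : ((fun K => sc * (sc - psumr c K)) @ \oo --> 0)%classic.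
    by rewrite -(mulr0 sc) -(subrr sc); apply: cvgMl_tmp; apply: cvgB => //; exact: cvg_cst.
  apply: (squeeze_cvgr (f := fun K => - (sc * (sc - psumr c K))) _ _ bound_cvg0).
    by near=> K; rewrite -ler_norml.
  by rewrite -oppr0; exact: cvgN.
rewrite (_ : (fun K => _) = err + psumr g); first by rewrite -[t]add0r; exact: cvgD.
by apply/funext => K; rewrite !fctE -psumrD; apply: psumr_eq => k _; rewrite subrK.
Unshelve. all: by end_near.
Qed.

End RealSeries.

Section ComplexSeries.
Variables (R : realType) (D : option nat).
Local Notation C := R[i].
Local Notation Re := (@complex.Re R).
Local Notation Im := (@complex.Im R).
Implicit Types (f g : nat -> C) (F : nat -> nat -> C) (s t : C).

Lemma ReD (x y : C) : Re (x + y) = Re x + Re y. Proof. by case: x; case: y. Qed.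
Lemma ImD (x y : C) : Im (x + y) = Im x + Im y. Proof. by case: x; case: y. Qed.
Lemma ReB (x y : C) : Re (x - y) = Re x - Re y. Proof. by case: x; case: y. Qed.
Lemma ImB (x y : C) : Im (x - y) = Im x - Im y. Proof. by case: x; case: y. Qed.

Lemma norm_le_Re_Im (z : C) (x : R) : `|z| <= x%:C%C -> `|Re z| <= x /\ `|Im z| <= x.
Proof.
rewrite normc_def lecR => zx; split; apply: le_trans zx.
  by rewrite -sqrtr_sqr ler_sqrt ?addr_ge0 ?sqr_ge0 // lerDl sqr_ge0.
by rewrite -sqrtr_sqr ler_sqrt ?addr_ge0 ?sqr_ge0 // lerDr sqr_ge0.
Qed.

Lemma ge0_complexE (z : C) : 0 <= z -> z = (Re z)%:C%C.
Proof. by case: z => x y /ger0_Im /= ->. Qed.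

Lemma conj_Im0 (z : C) : z^* = z -> Im z = 0.
Proof. by case: z => x y [] /=; lra. Qed.

Lemma psum_morph (p : C -> R) : p 0 = 0 -> {morph p : x y / x + y} ->
  forall f N, p (psum D f N) = psumr D (fun k => p (f k)) N.
Proof.
move=> p0 pD f N; rewrite /psum /psumr -big_mkord big_mkcond /=.
by rewrite (big_morph p pD p0); apply: eq_bigr => k _; rewrite /restr; case: ifP.
Qed.

Lemma Re_psum f N : Re (psum D f N) = psumr D (fun k => Re (f k)) N.
Proof. exact: (psum_morph (erefl : Re 0 = 0) (@ReD)). Qed.

Lemma Im_psum f N : Im (psum D f N) = psumr D (fun k => Im (f k)) N.
Proof. exact: (psum_morph (erefl : Im 0 = 0) (@ImD)). Qed.

Lemma sum_toP f s : sum_to D f s <->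
  rsum_to D (fun k => Re (f k)) (Re s) /\ rsum_to D (fun k => Im (f k)) (Im s).
Proof.
by rewrite /sum_to /rsum_to -(funext (Re_psum f)) -(funext (Im_psum f)).
Qed.

Lemma sum_to_eq f g s : (forall k, idx D k -> f k = g k) -> sum_to D f s -> sum_to D g s.
Proof.
move=> fg /sum_toP[fRe fIm]; apply/sum_toP.
by split; [apply: rsum_to_eq fRe | apply: rsum_to_eq fIm] => k /fg ->.
Qed.

Lemma sum_toB f g s t : sum_to D f s -> sum_to D g t ->
  sum_to D (fun k => f k - g k) (s - t).
Proof.
move=> /sum_toP[fRe fIm] /sum_toP[gRe gIm]; apply/sum_toP; rewrite ReB ImB.
by split; [apply: rsum_to_eq (rsum_toB fRe gRe) | apply: rsum_to_eq (rsum_toB fIm gIm)]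
  => k _; rewrite (ReB, ImB).
Qed.

Lemma sum_to_real f u (x : R) : (forall k, idx D k -> f k = (u k)%:C%C) ->
  rsum_to D u x -> sum_to D f x%:C%C.
Proof.
move=> fu us; apply/sum_toP; split; first by apply: rsum_to_eq us => k /fu ->.
by apply: rsum_to0 => k /fu ->.
Qed.

Lemma sum_to_delta k (z : C) :
  sum_to D (fun l => if k == l then z else 0) (if idx D k then z else 0).
Proof.
have delta (p : C -> R) : p 0 = 0 ->
    rsum_to D (fun l => p (if k == l then z else 0)) (p (if idx D k then z else 0)).
  move=> p0; have := rsum_to_delta (D := D) (u := fun l => p (if k == l then z else 0)) (k := k).
  rewrite /restr eqxx; case: ifP => _; rewrite ?p0; apply => l lk;
  by rewrite eq_sym (negbTE lk).
by apply/sum_toP; split; apply: delta.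
Qed.

Lemma sum_to_dominated f c M :
  (forall k, idx D k -> `|Re (f k)| <= c k /\ `|Im (f k)| <= c k) ->
  (forall N, psumr D c N <= M) -> exists s, sum_to D f s.
Proof.
move=> fc cM.
have [x fRe] := rsum_to_dominated (fun k Dk => (fc k Dk).1) cM.
have [y fIm] := rsum_to_dominated (fun k Dk => (fc k Dk).2) cM.
by exists (x +i* y)%C; apply/sum_toP.
Qed.

Lemma sum_to_fin d f : D = Some d -> exists s, sum_to D f s.
Proof.
move=> Dd; pose c k := `|Re (f k)| + `|Im (f k)|.
have c0 k : 0 <= c k by rewrite addr_ge0.
apply: (@sum_to_dominated f c (psumr D c d)) => [k _|N].
  by rewrite lerDl lerDr !normr_ge0.
have [dN|Nd] := leqP d N; first by rewrite (psumr_fin _ Dd dN).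
by apply: psumr_nondecreasing (ltnW Nd) => k _; exact: c0.
Qed.

Definition square_psum F K : C := psum D (fun k => psum D (F k) K) K.

Lemma dsum_to_square F c sc :
  (forall k, idx D k -> 0 <= c k) ->
  (forall k l, idx D k -> idx D l -> `|F k l| <= (c k * c l)%:C%C) ->
  rsum_to D c sc ->
  exists t, [/\ dsum_to D F t,
    ((fun K => Re (square_psum F K)) @ \oo --> Re t)%classic &
    ((fun K => Im (square_psum F K)) @ \oo --> Im t)%classic].
Proof.
move=> c0 Fc_norm csc.
have Fc k l Dk Dl := norm_le_Re_Im (Fc_norm k l Dk Dl).
have sc0 : 0 <= sc := rsum_to_ge0 c0 csc.
have row_sum k : exists s, sum_to D (F k) s.
  case Dk: (idx D k).
    apply: (@sum_to_dominated (F k) (fun l => c k * c l) (c k * sc)) => [l Dl|N].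
      exact: Fc.
    by rewrite psumrMl ler_wpM2l ?c0 ?psumr_le_rsum.
  by move: Dk; rewrite /idx; case Dd: D => [d|] // _; rewrite -Dd; exact: sum_to_fin Dd.
have [g Fg] := boolp.choice row_sum.
have FgRe k := ((sum_toP _ _).1 (Fg k)).1.
have FgIm k := ((sum_toP _ _).1 (Fg k)).2.
have g_le k : idx D k -> `|Re (g k)| <= sc * c k /\ `|Im (g k)| <= sc * c k.
  move=> Dk; rewrite mulrC.
  have := rsum_to_tail (fun l Dl => (Fc k l Dk Dl).1) (FgRe k) (rsum_toMl (a := c k) csc) 0.
  have := rsum_to_tail (fun l Dl => (Fc k l Dk Dl).2) (FgIm k) (rsum_toMl (a := c k) csc) 0.
  by rewrite !psumr0 !subr0.
have [t gt] : exists t, sum_to D g t.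
  apply: (@sum_to_dominated g (fun k => sc * c k) (sc * sc) g_le) => N.
  by rewrite psumrMl ler_wpM2l ?psumr_le_rsum.
have [gRe gIm] := (sum_toP _ _).1 gt.
exists t; split; first by exists g.
- under eq_fun do rewrite /square_psum Re_psum (psumr_eq _ (fun k _ => Re_psum (F k) _)).
  by apply: rsum_to_square c0 _ csc (fun k _ => FgRe k) gRe => k l Dk Dl; case: (Fc k l Dk Dl).
- under eq_fun do rewrite /square_psum Im_psum (psumr_eq _ (fun k _ => Im_psum (F k) _)).
  by apply: rsum_to_square c0 _ csc (fun k _ => FgIm k) gIm => k l Dk Dl; case: (Fc k l Dk Dl).
Qed.

Lemma square_psum_conj F K : (forall k l, idx D k -> idx D l -> (F k l)^* = F l k) ->
  (square_psum F K)^* = square_psum F K.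
Proof.
move=> FJ; rewrite /square_psum /psum rmorph_sum; under eq_bigr do rewrite rmorph_sum.
by rewrite exchange_big; apply: eq_bigr => l Dl; apply: eq_bigr => k Dk; exact: FJ.
Qed.

Lemma dsum_to_offdiag F t d : dsum_to D F t -> sum_to D (fun k => F k k) d ->
  dsum_to D (fun k l => if k != l then F k l else 0) (t - d).
Proof.
case=> g [Fg gt] diag; exists (fun k => g k - (if idx D k then F k k else 0)); split.
  move=> k; apply: sum_to_eq (sum_toB (Fg k) (sum_to_delta k (F k k))) => l _.
  by case: eqVneq => [<-|_]; rewrite ?subrr ?subr0.
by apply: sum_toB gt (sum_to_eq _ diag) => k ->.
Qed.

End ComplexSeries.

Section DensityMatrix.
Variables (R : realType) (D : option nat).
Local Notation C := R[i].
Local Notation Re := (@complex.Re R).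

Lemma normC_Re (z : C) : `|z| = (Re `|z|)%:C%C.
Proof. by []. Qed.

Lemma Re_norm_ge0 (z : C) : 0 <= Re `|z|.
Proof. by rewrite -ler0c -normC_Re. Qed.

Lemma psd2_entries (A B B' E : C) :
  (forall a b : C, 0 <= a^* * (a * A + b * B) + b^* * (a * B' + b * E)) ->
  [/\ 0 <= A, B' = B^* & `|B| ^+ 2 <= A * E].
Proof.
case: A => A1 A2; case: B => p q; case: B' => p' q'; case: E => E1 E2 H.
have [A2_0 E2_0 p'_p q'_q] : [/\ A2 = 0, E2 = 0, p' = p & q' = - q].
  move: (H 1 0) (H 0 1) (H 1 1) (H 1 'i%C); rewrite !lecE /=.
  by move=> /andP[/eqP ? _] /andP[/eqP ? _] /andP[/eqP ? _] /andP[/eqP ? _]; split; lra.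
subst A2 E2 p' q'.
have form a b : 0 <= Re (a^* * (a * (A1 +i* 0)%C + b * (p +i* q)%C) +
                        b^* * (a * (p -i* q)%C + b * (E1 +i* 0)%C)).
  by have := H a b; rewrite lecE => /andP[].
have A1_ge0 : 0 <= A1 by have := form 1 0; rewrite /=; lra.
have E1_ge0 : 0 <= E1 by have := form 0 1; rewrite /=; lra.
split.
- by rewrite lecE /= eqxx.
- by [].
rewrite -add_Re2_Im2 lecE /= !(mulr0, mul0r, subr0, addr0) eqxx /=.
(* The form is A (AE - |B|^2) at (-B, A) and E (AE - |B|^2) at (E, -B^* ). *)
have h1 : 0 <= A1 * (A1 * E1 - (p ^+ 2 + q ^+ 2)).
  by have := form (- (p +i* q))%C A1%:C%C; rewrite /=; nra.
have h2 : 0 <= E1 * (A1 * E1 - (p ^+ 2 + q ^+ 2)).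
  by have := form E1%:C%C ((- p) +i* q)%C; rewrite /=; nra.
have h3 : 0 <= A1 * (p ^+ 2 + q ^+ 2) - 2 * (p ^+ 2 + q ^+ 2) + E1.
  by have := form (- (p +i* q))%C 1; rewrite /=; nra.
rewrite -subr_ge0.
have [A1_gt0|A1_le0] := ltrP 0 A1; first by move: h1; rewrite pmulr_rge0.
have [E1_gt0|E1_le0] := ltrP 0 E1; first by move: h2; rewrite pmulr_rge0.
have A1_0 : A1 = 0 by lra.
have E1_0 : E1 = 0 by lra.
move: h3; rewrite A1_0 E1_0; lra.
Qed.

Lemma sum_idx_kronecker (f : nat -> C) N k : (k < N)%N -> idx D k ->
  \sum_(j < N | idx D j) (j == k :> nat)%:R * f j = f k.
Proof.
move=> kN Dk; rewrite (bigD1 (Ordinal kN)) //= eqxx mul1r big1 ?addr0 // => j /andP[_ jk].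
rewrite (_ : (nat_of_ord j == k) = false) ?mul0r //.
by apply: contraNF jk => /eqP jk; apply/eqP/val_inj.
Qed.

Lemma quad_form_pair (rho : nat -> nat -> C) N k l (a b : C) :
  (k < N)%N -> (l < N)%N -> idx D k -> idx D l ->
  let x j := (j == k :> nat)%:R * a + (j == l :> nat)%:R * b in
  \sum_(j < N | idx D j) \sum_(j' < N | idx D j') (x j)^* * rho j j' * x j'
  = a^* * (a * rho k k + b * rho k l) + b^* * (a * rho l k + b * rho l l).
Proof.
move=> kN lN Dk Dl x.
have row j : \sum_(j' < N | idx D j') (x j)^* * rho j j' * x j'
             = (x j)^* * (a * rho j k + b * rho j l).
  rewrite -(sum_idx_kronecker (fun j' => a * rho j j') kN Dk).
  rewrite -(sum_idx_kronecker (fun j' => b * rho j j') lN Dl).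
  by rewrite -big_split mulr_sumr; apply: eq_bigr => j' _; rewrite /x /=; ring.
rewrite (eq_bigr _ (fun (j : 'I_N) _ => row j)).
rewrite -(sum_idx_kronecker (fun j => a^* * (a * rho j k + b * rho j l)) kN Dk).
rewrite -(sum_idx_kronecker (fun j => b^* * (a * rho j k + b * rho j l)) lN Dl).
by rewrite -big_split; apply: eq_bigr => j _; rewrite /x /= rmorphD !rmorphM /= !rmorph_nat; ring.
Qed.

Variable rho : nat -> nat -> C.
Hypothesis rho_density : density_matrix D rho.

Lemma density_entries k l : idx D k -> idx D l ->
  [/\ 0 <= rho k k, rho l k = (rho k l)^* & `|rho k l| ^+ 2 <= rho k k * rho l l].
Proof.
move=> Dk Dl; apply: psd2_entries => a b.
have := rho_density.1 (maxn k l).+1 (fun j => (j == k)%:R * a + (j == l)%:R * b).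
by rewrite quad_form_pair // ltnS ?leq_maxl ?leq_maxr.
Qed.

Lemma density_trace : rsum_to D (fun k => Re (rho k k)) 1.
Proof. exact: ((sum_toP D _ _).1 rho_density.2).1. Qed.

End DensityMatrix.

Section Bounds.
Variables (R : realType) (D : option nat) (rho U : nat -> nat -> R[i]).
Hypotheses (rho_density : density_matrix D rho) (U_unitary : unitary_matrix D U).
Local Notation Re := (@complex.Re R).
Local Notation Im := (@complex.Im R).

Let r k := Re (rho k k).

Lemma density_diagE k : idx D k -> rho k k = (r k)%:C%C.
Proof. by move=> Dk; have [/ge0_complexE] := density_entries rho_density Dk Dk. Qed.

Lemma r_ge0 k : idx D k -> 0 <= r k.
Proof.
by move=> Dk; rewrite -ler0c -density_diagE //; have [] := density_entries rho_density Dk Dk.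
Qed.

Lemma unitary_entry_le1 p k : idx D p -> idx D k -> Re `|U p k| <= 1.
Proof.
move=> Dp Dk; have [row _] := U_unitary Dp Dp; rewrite eqxx in row.
have [rowRe _] := (sum_toP D _ _).1 row.
have sq : rsum_to D (fun j => Re `|U p j| ^+ 2) 1.
  by apply: rsum_to_eq rowRe => j _; rewrite -normCK [`|U p j|]normC_Re -rmorphXn.
have := term_le_rsum (fun j _ => sqr_ge0 (Re `|U p j|)) sq Dk.
by rewrite expr_le1 // Re_norm_ge0.
Qed.

Lemma weight_sum p : idx D p -> exists mu : R,
  sum_to D (fun k => `|U p k| ^+ 2 * rho k k) mu%:C%C /\
  rsum_to D (fun k => Re `|U p k| ^+ 2 * r k) mu.
Proof.
move=> Dp; pose w k := Re `|U p k| ^+ 2 * r k.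
have w_ge0 k : idx D k -> 0 <= w k by move=> Dk; rewrite mulr_ge0 ?sqr_ge0 ?r_ge0.
have w_le k : idx D k -> `|w k| <= r k.
  move=> Dk; rewrite ger0_norm ?w_ge0 // ler_piMl ?r_ge0 //.
  by rewrite expr_le1 ?Re_norm_ge0 ?unitary_entry_le1.
have [mu wmu] := rsum_to_dominated w_le (psumr_le_rsum r_ge0 (density_trace rho_density)).
exists mu; split => //; apply: sum_to_real wmu => k Dk.
by rewrite density_diagE // [`|U p k|]normC_Re -rmorphXn -rmorphM.
Qed.

Variables m n : nat.
Hypotheses (Dm : idx D m) (Dn : idx D n).

Let F k l := U m k * (U m l)^* * (U n k)^* * U n l * `|rho k l| ^+ 2.
Let c k := Re `|U m k| * Re `|U n k| * r k.
Let X k := Re `|U m k| ^+ 2 * r k.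
Let Y k := Re `|U n k| ^+ 2 * r k.

Lemma c_ge0 k : idx D k -> 0 <= c k.
Proof. by move=> Dk; rewrite !mulr_ge0 ?Re_norm_ge0 ?r_ge0. Qed.

Lemma c_summable : exists sc, rsum_to D c sc.
Proof.
apply: (rsum_to_dominated (c := r)) => [k Dk|N].
  rewrite ger0_norm ?c_ge0 // /c -[leRHS]mul1r ler_wpM2r ?r_ge0 //.
  by rewrite mulr_ile1 ?Re_norm_ge0 ?unitary_entry_le1.
exact: psumr_le_rsum r_ge0 (density_trace rho_density) N.
Qed.

Lemma F_norm_le k l : idx D k -> idx D l -> `|F k l| <= (c k * c l)%:C%C.
Proof.
move=> Dk Dl; have [_ _ rho_kl] := density_entries rho_density Dk Dl.
rewrite /F !normrM !norm_conjC !normr_id -expr2.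
have -> : (c k * c l)%:C%C = `|U m k| * `|U m l| * `|U n k| * `|U n l| * (rho k k * rho l l).
  rewrite !density_diagE // [`|U m k|]normC_Re [`|U m l|]normC_Re [`|U n k|]normC_Re.
  by rewrite [`|U n l|]normC_Re -!rmorphM /c; congr (_%:C%C); ring.
by rewrite ler_wpM2l ?mulr_ge0.
Qed.

Lemma F_adjoint k l : idx D k -> idx D l -> (F k l)^* = F l k.
Proof.
move=> Dk Dl; have [_ rho_lk _] := density_entries rho_density Dk Dl.
by rewrite /F rho_lk norm_conjC !normCK !rmorphM /= !conjCK; ring.
Qed.

Lemma F_diag k : idx D k -> F k k = (c k ^+ 2)%:C%C.
Proof.
move=> Dk; have [rho_ge0 _ _] := density_entries rho_density Dk Dk.
have -> : F k k = `|U m k| ^+ 2 * `|U n k| ^+ 2 * `|rho k k| ^+ 2 by rewrite /F !normCK; ring.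
rewrite (ger0_norm rho_ge0) density_diagE // [`|U m k|]normC_Re [`|U n k|]normC_Re.
by rewrite -!rmorphXn -!rmorphM /c; congr (_%:C%C); ring.
Qed.

Lemma Re_F_le k l : idx D k -> idx D l -> 2 * Re (F k l) <= X k * Y l + Y k * X l.
Proof.
move=> Dk Dl; have [ReF _] := norm_le_Re_Im (F_norm_le Dk Dl).
have ReF' := le_trans (ler_norm _) ReF.
have := mulr_ge0 (mulr_ge0 (r_ge0 Dk) (r_ge0 Dl))
  (sqr_ge0 (Re `|U m k| * Re `|U n l| - Re `|U n k| * Re `|U m l|)).
move: ReF'; rewrite /c /X /Y; nra.
Qed.

Lemma Im_square_psum K : Im (square_psum D F K) = 0.
Proof. by apply: conj_Im0; apply: square_psum_conj => k l Dk Dl; exact: F_adjoint. Qed.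

Lemma Re_square_psum_le K : Re (square_psum D F K) <= psumr D X K * psumr D Y K.
Proof.
have ReS : 2 * Re (square_psum D F K)
           = psumr D (fun k => psumr D (fun l => 2 * Re (F k l)) K) K.
  rewrite /square_psum Re_psum -psumrMl; apply: psumr_eq => k _.
  by rewrite Re_psum psumrMl.
have double : psumr D (fun k => psumr D (fun l => X k * Y l + Y k * X l) K) K
              = 2 * (psumr D X K * psumr D Y K).
  rewrite (psumr_eq (v := fun k => X k * psumr D Y K + Y k * psumr D X K)).
    by rewrite psumrD !psumrMr; ring.
  by move=> k _; rewrite psumrD !psumrMl.
have : 2 * Re (square_psum D F K) <= 2 * (psumr D X K * psumr D Y K).
  by rewrite ReS -double; apply: psumr_le => k Dk; apply: psumr_le => l Dl; exact: Re_F_le.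
lra.
Qed.

Lemma F_dsum : exists t, [/\ dsum_to D F t, Im t = 0 &
  forall mum mun, rsum_to D X mum -> rsum_to D Y mun -> Re t <= mum * mun].
Proof.
have [sc csc] := c_summable.
have [t [Ft ReS ImS]] := dsum_to_square c_ge0 F_norm_le csc.
exists t; split => //.
  rewrite (_ : (fun K => _) = fun=> 0) in ImS; last by apply/funext => K; exact: Im_square_psum.
  apply/eqP; rewrite eq_le; apply/andP; split.
    by apply: (ler_cvg_to ImS (cvg_cst 0)); near=> K.
  by apply: (ler_cvg_to (cvg_cst 0) ImS); near=> K.
move=> mum mun Xmum Ymun; apply: (ler_cvg_to ReS (cvg_cst (mum * mun))); near=> K.
have X_ge0 k : idx D k -> 0 <= X k by move=> Dk; rewrite mulr_ge0 ?sqr_ge0 ?r_ge0.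
have Y_ge0 k : idx D k -> 0 <= Y k by move=> Dk; rewrite mulr_ge0 ?sqr_ge0 ?r_ge0.
apply: le_trans (Re_square_psum_le K) _.
by rewrite ler_pM ?psumr_ge0 ?(psumr_le_rsum X_ge0 Xmum) ?(psumr_le_rsum Y_ge0 Ymun).
Unshelve. all: by end_near.
Qed.

Lemma F_diag_sum : exists d : R, sum_to D (fun k => F k k) d%:C%C /\ 0 <= d.
Proof.
have [sc csc] := c_summable.
have [d c2d] : exists d, rsum_to D (fun k => c k ^+ 2) d.
  apply: (rsum_to_dominated (c := fun k => sc * c k) (M := sc * sc)) => [k Dk|N].
    rewrite ger0_norm ?sqr_ge0 // expr2 mulrC.
    by rewrite ler_wpM2r ?c_ge0 ?(term_le_rsum c_ge0 csc).
  by rewrite psumrMl ler_wpM2l ?(rsum_to_ge0 c_ge0 csc) ?(psumr_le_rsum c_ge0 csc).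
exists d; split; last by apply: rsum_to_ge0 c2d => k _; exact: sqr_ge0.
by apply: sum_to_real c2d => k Dk; exact: F_diag.
Qed.

End Bounds.

Theorem lemma2 (R : realType) (D : option nat)
    (rho U : nat -> nat -> R[i]) :
  density_matrix D rho -> unitary_matrix D U ->
  forall m n, idx D m -> idx D n ->
  exists mu_m mu_n nu nut : R[i],
    sum_to D (fun k => `|U m k| ^+ 2 * rho k k) mu_m /\
    sum_to D (fun k => `|U n k| ^+ 2 * rho k k) mu_n /\
    dsum_to D (fun k l => if k != l then
        U m k * (U m l)^* * (U n k)^* * U n l * `|rho k l| ^+ 2 else 0) nu /\
    dsum_to D (fun k l =>
        U m k * (U m l)^* * (U n k)^* * U n l * `|rho k l| ^+ 2) nut /\
    nu <= nut /\ nut <= mu_m * mu_n.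
Proof.
move=> rhoD UU m n Dm Dn.
have [mum [Smum Xmum]] := weight_sum rhoD UU Dm.
have [mun [Smun Ymun]] := weight_sum rhoD UU Dn.
have [t [St Im_t Re_t]] := F_dsum rhoD UU Dm Dn.
have [d [Sd d_ge0]] := F_diag_sum rhoD UU Dm Dn.
exists mum%:C%C, mun%:C%C, (t - d%:C%C), t.
split => //; split => //; split; first exact: dsum_to_offdiag St Sd.
split => //; split; first by rewrite gerBl ler0c.
by rewrite -rmorphM lecE /= Im_t eqxx Re_t.
Qed.
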